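(* A positive semidefinite $d\times d$ matrix $\xi$ is a correlation matrix if and only if $\mathcal P^\dagger(\xi)=I$ for some quantum channel $\mathcal P$ on $S$ satisfying $\mathcal P(\mathsf{St}(S))=\mathsf P(S)$.
   Context: $S$ is a $d$-dimensional quantum system with non-degenerate Hamiltonian $H=\sum_i E_i|i\rangle\langle i|$, $E_1<\dots<E_d$; matrices are written in the eigenbasis $\{|i\rangle\}$. $\mathsf{St}(S)$ is the set of density matrices; $\mathsf P(S)$ is the set of passive states, i.e. states $\sum_i p_i|i\rangle\langle i|$ with $p_1\ge\dots\ge p_d$. A correlation matrix is a positive semidefinite matrix $\xi$ with $\xi_{ii}=1$ for all $i$. $\mathcal P^\dagger$ is the adjoint map: $\mathrm{Tr}[A\mathcal P(B)]=\mathrm{Tr}[\mathcal P^\dagger(A)B]$. *)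

From mathcomp Require Import all_boot all_order all_algebra.
From mathcomp Require Import reals.
From mathcomp.real_closed Require Export complex.
Set Implicit Arguments. Unset Strict Implicit. Unset Printing Implicit Defensive.
Import Order.TTheory GRing.Theory Num.Theory.
Local Open Scope ring_scope.

Section QDefs.
Variable C : numClosedFieldType.

Definition psd_kernel (I : finType) (A : I -> I -> C) : Prop :=
  (forall i j, A j i = (A i j)^*) /\
  (forall v : I -> C, 0 <= \sum_i \sum_j (v i)^* * A i j * v j).

Definition psd (d : nat) (A : 'M[C]_d) : Prop := psd_kernel (fun i j => A i j).

Definition density (d : nat) (rho : 'M[C]_d) : Prop := psd rho /\ \tr rho = 1.

(* Passive states P(S): states sum_i p_i |i><i| with p_1 >= ... >= p_d
   (indices ordered by increasing energy). *)
Definition passive (d : nat) (sigma : 'M[C]_d) : Prop :=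
  density sigma /\ is_diag_mx sigma /\
  (forall i j : 'I_d, (i <= j)%N -> sigma j j <= sigma i i).

Definition correlation (d : nat) (xi : 'M[C]_d) : Prop :=
  psd xi /\ forall i, xi i i = 1.

(* Complete positivity: for every k, id_k (x) P maps psd operators on C^k (x) C^d
   (an operator on C^k (x) C^d is given by blocks X a b : 'M_d, a b : 'I_k)
   to psd operators. *)
Definition completely_positive (d : nat) (P : 'M[C]_d -> 'M[C]_d) : Prop :=
  forall (k : nat) (X : 'I_k -> 'I_k -> 'M[C]_d),
    psd_kernel (fun p q : 'I_k * 'I_d => X p.1 q.1 p.2 q.2) ->
    psd_kernel (fun p q : 'I_k * 'I_d => P (X p.1 q.1) p.2 q.2).

Definition trace_preserving (d : nat) (P : 'M[C]_d -> 'M[C]_d) : Prop :=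
  forall X, \tr (P X) = \tr X.

Definition channel (d : nat) (P : {linear 'M[C]_d -> 'M[C]_d}) : Prop :=
  completely_positive P /\ trace_preserving P.

Definition image_St_is_passive (d : nat) (P : 'M[C]_d -> 'M[C]_d) : Prop :=
  (forall rho, density rho -> passive (P rho)) /\
  (forall sigma, passive sigma -> exists2 rho, density rho & P rho = sigma).

(* "P^dagger(A) = Y", where P^dagger is the adjoint defined by
   Tr[A P(B)] = Tr[P^dagger(A) B] for all B. *)
Definition adjoint_maps (d : nat) (P : 'M[C]_d -> 'M[C]_d) (A Y : 'M[C]_d) : Prop :=
  forall B, \tr (A *m P B) = \tr (Y *m B).

End QDefs.

From HB Require Import structures.
From mathcomp Require Import all_boot all_order all_algebra.
From mathcomp Require Import reals.
From mathcomp.real_closed Require Import complex.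
From mathcomp Require Import ring.
Set Implicit Arguments. Unset Strict Implicit. Unset Printing Implicit Defensive.
Import Order.TTheory GRing.Theory Num.Theory.
Local Open Scope ring_scope.

(* Both directions go through the diagonal of xi in the energy basis.
   - Population maps: for weights w, the map B |-> diag_i (sum_k w i k B_kk)
     (dephasing followed by a classical transition matrix) is completely
     positive when w >= 0 and trace preserving when w is column stochastic; its
     adjoint sends an observable A to diag_k (sum_i A_ii w i k), hence sends
     every matrix with unit diagonal to the identity.
   - The passivizer: with w i k = [i <= k] / (k+1) (the k-th column is the
     uniform state tau k on the k+1 lowest levels) the population map sends
     states to passive states and reaches every passive state, by telescoping.
     This gives the direct implication.
   - Conversely, if P(St) contains all passive states and P^dagger(xi) = I, then
     Tr[xi tau k] = 1 for all k, i.e. every prefix sum sum_(i <= k) xi_ii equals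
     k+1, which forces xi_ii = 1. *)

Section PsdKernels.
Variable C : numClosedFieldType.

(* Pulling a positive semidefinite kernel back along any map f keeps it positive
   semidefinite: the quadratic form of v is that of K at the pushforward of v. *)
Lemma psd_kernel_comp (I J : finType) (K : J -> J -> C) (f : I -> J) :
  psd_kernel K -> psd_kernel (fun a b => K (f a) (f b)).
Proof.
move=> [herm pos]; split=> [a b|v]; first exact: herm.
pose u y := \sum_(a | f a == y) v a.
have collect (G : J -> I -> C) : \sum_a G (f a) a = \sum_y \sum_(a | f a == y) G y a.
  rewrite (partition_big f xpredT) //=; apply: eq_bigr => y _.
  by apply: eq_bigr => a /eqP <-.
suff -> : \sum_a \sum_b (v a)^* * K (f a) (f b) * v b =
    \sum_x \sum_y (u x)^* * K x y * u y by exact: pos.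
rewrite (collect (fun y a => \sum_b (v a)^* * K y (f b) * v b)).
apply: eq_bigr => x _.
rewrite (eq_bigr (fun a => \sum_y \sum_(b | f b == y) (v a)^* * K x y * v b));
  last by move=> a _; rewrite (collect (fun y b => (v a)^* * K x y * v b)).
rewrite exchange_big; apply: eq_bigr => y _.
by rewrite /u rmorph_sum !mulr_suml; apply: eq_bigr => a _; rewrite mulr_sumr.
Qed.

Lemma psd_diag_ge0 d (A : 'M[C]_d) i : psd A -> 0 <= A i i.
Proof.
move=> [_ pos]; have := pos (fun j => (j == i)%:R).
rewrite (bigD1 i) //= [X in _ + X]big1 ?addr0 => [|j /negPf ji]; last first.
  by apply: big1 => k _; rewrite ji rmorph0 !mul0r.
rewrite (bigD1 i) //= [X in _ + X]big1 ?addr0 => [|k /negPf ki]; last by rewrite ki mulr0.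
by rewrite eqxx rmorph1 mul1r mulr1.
Qed.

End PsdKernels.

Section DiagonalMatrices.
Variables (C : numClosedFieldType) (d : nat).
Implicit Types (p : 'rV[C]_d) (A : 'M[C]_d).

Lemma diag_mx_entry p i j : diag_mx p i j = p 0 i *+ (i == j).
Proof. by rewrite mxE. Qed.

Lemma psd_diag_mx p : (forall i, 0 <= p 0 i) -> psd (diag_mx p).
Proof.
move=> p_ge0; split=> [i j|v].
  rewrite !diag_mx_entry eq_sym; have [<-|] := eqVneq i j; last by rewrite rmorph0.
  by rewrite !mulr1n geC0_conj.
apply: sumr_ge0 => i _; rewrite (bigD1 i) //= [X in _ + X]big1 ?addr0 => [|j /negPf ij].
  by rewrite diag_mx_entry eqxx mulr1n mulrAC mulr_ge0 // mulrC mul_conjC_ge0.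
by rewrite diag_mx_entry eq_sym ij mulr0n mulr0 mul0r.
Qed.

Lemma diag_mx_diagonal A : is_diag_mx A -> A = diag_mx (\row_i A i i).
Proof.
move=> /diag_mxP[p ->]; congr diag_mx; apply/rowP => i.
by rewrite mxE diag_mx_entry eqxx mulr1n.
Qed.

Lemma mxtrace_mul_diag A p : \tr (A *m diag_mx p) = \sum_i A i i * p 0 i.
Proof. by rewrite /mxtrace; apply: eq_bigr => i _; rewrite mul_mx_diag mxE. Qed.

Lemma passive_diag_mx p :
  (forall i, 0 <= p 0 i) -> \sum_i p 0 i = 1 ->
  (forall i j : 'I_d, (i <= j)%N -> p 0 j <= p 0 i) -> passive (diag_mx p).
Proof.
move=> p_ge0 p_sum1 p_antitone; split; [split|split].
- exact: psd_diag_mx.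
- by rewrite mxtrace_diag.
- exact: diag_mx_is_diag.
- by move=> i j ij; rewrite !diag_mx_entry !eqxx !mulr1n p_antitone.
Qed.

End DiagonalMatrices.

Section PopulationMaps.
Variables (C : numClosedFieldType) (d : nat) (w : 'I_d -> 'I_d -> C).

(* Dephase in the energy eigenbasis, then redistribute the populations with the
   transition matrix w: the output is diagonal with entries sum_k w i k B_kk. *)
Definition popmap (B : 'M[C]_d) : 'M[C]_d := diag_mx (\row_i \sum_k w i k * B k k).

Lemma popmap_entry B i j : popmap B i j = (\sum_k w i k * B k k) *+ (i == j).
Proof. by rewrite diag_mx_entry mxE. Qed.

Lemma popmap_linear : linear popmap.
Proof.
move=> a A B; apply/matrixP => i j; rewrite popmap_entry !mxE mulrnAr -mulrnDl.
congr (_ *+ _); rewrite mulr_sumr -big_split; apply: eq_bigr => k _.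
by rewrite !mxE mulrDr mulrCA.
Qed.

HB.instance Definition _ := GRing.isLinear.Build C 'M[C]_d 'M[C]_d _ popmap popmap_linear.

(* A population map with nonnegative transition weights is completely positive:
   its Choi-type quadratic forms split into nonnegative combinations of
   quadratic forms of diagonal slices of the input. *)
Lemma popmap_cp : (forall i k, 0 <= w i k) -> completely_positive popmap.
Proof.
move=> w_ge0 n X Xpsd; have [herm pos] := Xpsd; split=> [p q|v].
  rewrite !popmap_entry eq_sym; have [e|] := eqVneq p.2 q.2; last by rewrite rmorph0.
  rewrite !mulr1n rmorph_sum; apply: eq_bigr => m _.
  by rewrite rmorphM /= geC0_conj // -e (herm (p.1, m) (q.1, m)).
have sum_pair (F : 'I_n * 'I_d -> C) : \sum_p F p = \sum_a \sum_i F (a, i).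
  by rewrite pair_bigA; apply: eq_bigr => -[].
have slice_ge0 i m : 0 <= \sum_a \sum_b (v (a, i))^* * X a b m m * v (b, i).
  exact: (psd_kernel_comp (fun a => (a, m)) Xpsd).2 (fun a => v (a, i)).
suff -> : \sum_p \sum_q (v p)^* * popmap (X p.1 q.1) p.2 q.2 * v q =
    \sum_i \sum_m w i m * \sum_a \sum_b (v (a, i))^* * X a b m m * v (b, i).
  by do 2!apply: sumr_ge0 => ? _; rewrite mulr_ge0.
transitivity (\sum_a \sum_i \sum_b \sum_m
                w i m * ((v (a, i))^* * X a b m m * v (b, i))).
  rewrite sum_pair; apply: eq_bigr => a _; apply: eq_bigr => i _.
  rewrite sum_pair; apply: eq_bigr => b _.
  rewrite (bigD1 i) //= [X in _ + X]big1 ?addr0 => [|j /negPf ij]; last first.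
    by rewrite popmap_entry /= eq_sym ij mulr0n mulr0 mul0r.
  rewrite popmap_entry /= eqxx mulr1n mulr_sumr mulr_suml; apply: eq_bigr => m _.
  by ring.
rewrite exchange_big; apply: eq_bigr => i _ /=.
rewrite (eq_bigr (fun a => \sum_m \sum_b w i m * ((v (a, i))^* * X a b m m * v (b, i))));
  last by move=> a _; rewrite exchange_big.
rewrite exchange_big; apply: eq_bigr => m _ /=.
by rewrite mulr_sumr; apply: eq_bigr => a _; rewrite mulr_sumr.
Qed.

Lemma popmap_adjoint (A : 'M[C]_d) :
  adjoint_maps popmap A (diag_mx (\row_k \sum_i A i i * w i k)).
Proof.
move=> B; rewrite mxtrace_mul_diag mxtrace_mulC mxtrace_mul_diag.
under eq_bigr do rewrite mxE mulr_sumr.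
rewrite exchange_big; apply: eq_bigr => k _; rewrite mxE mulr_sumr.
by apply: eq_bigr => i _; ring.
Qed.

Lemma popmap_adjoint_unit_diag (A : 'M[C]_d) :
  (forall k, \sum_i w i k = 1) -> (forall i, A i i = 1) -> adjoint_maps popmap A 1%:M.
Proof.
move=> w_sum1 A_diag B; rewrite (popmap_adjoint A B) -diag_const_mx.
congr (\tr (diag_mx _ *m B)); apply/rowP => k; rewrite !mxE -[RHS](w_sum1 k).
by apply: eq_bigr => i _; rewrite A_diag mul1r.
Qed.

(* Column-stochastic weights conserve the trace (the previous lemma with A = 1). *)
Lemma popmap_tp : (forall k, \sum_i w i k = 1) -> trace_preserving popmap.
Proof.
move=> w_sum1 B; have := popmap_adjoint_unit_diag (A := 1%:M) w_sum1 _ B.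
by rewrite !mul1mx; apply=> i; rewrite mxE eqxx.
Qed.

End PopulationMaps.

Lemma unit_diag_of_prefix_sums (R : pzRingType) (d : nat) (a : 'I_d -> R) :
  (forall k : 'I_d, \sum_(i < d | (i <= k)%N) a i = k.+1%:R) -> forall i, a i = 1.
Proof.
move=> prefix_sum; have prefix m : (m <= d)%N -> \sum_(i < d | (i < m)%N) a i = m%:R.
  by case: m => [_|m md]; [rewrite big_pred0 | exact: prefix_sum (Ordinal md)].
move=> i; have := prefix i.+1 (ltn_ord i); rewrite (bigD1 i) //=.
rewrite (eq_bigl (fun j : 'I_d => (j < i)%N)) => [|j]; last first.
  by rewrite ltnS [RHS]ltn_neqAle andbC.
by rewrite prefix 1?ltnW // -natr1 addrC => /addrI.
Qed.

Section Passivizer.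
Variables (C : numClosedFieldType) (d : nat).

Definition lowest_uniform (i k : 'I_d) : C := (i <= k)%N%:R / k.+1%:R.

Definition tau (k : 'I_d) : 'M[C]_d := diag_mx (\row_i lowest_uniform i k).

Lemma sum_lt_ord m : (m <= d)%N -> \sum_(i < d | (i < m)%N) (1 : C) = m%:R.
Proof. by move=> md; rewrite (big_ord_narrow md) sumr_const card_ord. Qed.

Lemma lowest_uniform_ge0 i k : 0 <= lowest_uniform i k.
Proof. by rewrite mulr_ge0 ?invr_ge0 ?ler0n. Qed.

Lemma lowest_uniform_sum1 k : \sum_i lowest_uniform i k = 1.
Proof.
rewrite -mulr_suml; suff -> : \sum_(i < d) ((i <= k)%N%:R : C) = k.+1%:R.
  by rewrite mulfV ?pnatr_eq0.
rewrite -(@sum_lt_ord k.+1 (ltn_ord k)) [RHS]big_mkcond; apply: eq_bigr => i _.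
by rewrite ltnS; case: (i <= k)%N.
Qed.

Lemma lowest_uniform_antitone (i j k : 'I_d) :
  (i <= j)%N -> lowest_uniform j k <= lowest_uniform i k.
Proof.
move=> ij; rewrite ler_wpM2r ?invr_ge0 ?ler0n // ler_nat.
by case: (leqP j k) => // jk; rewrite (leq_trans ij jk).
Qed.

Lemma tau_passive k : passive (tau k).
Proof.
apply: passive_diag_mx => [i||i j ij]; rewrite ?mxE.
- exact: lowest_uniform_ge0.
- by under eq_bigr do rewrite mxE; exact: lowest_uniform_sum1.
- exact: lowest_uniform_antitone.
Qed.

Lemma passivizer_channel : channel (popmap lowest_uniform).
Proof.
split; first exact/popmap_cp/lowest_uniform_ge0.
exact/popmap_tp/lowest_uniform_sum1.
Qed.

Lemma passivizer_passive rho : density rho -> passive (popmap lowest_uniform rho).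
Proof.
move=> [rho_psd rho_tr]; apply: passive_diag_mx => [i||i j ij]; rewrite ?mxE.
- by apply: sumr_ge0 => k _; rewrite mulr_ge0 ?lowest_uniform_ge0 ?psd_diag_ge0.
- by rewrite -mxtrace_diag (popmap_tp lowest_uniform_sum1).
- apply: ler_sum => k _; rewrite ler_wpM2r ?psd_diag_ge0 //.
  exact: lowest_uniform_antitone.
Qed.

(* Every passive state sigma is reached: feed in the diagonal state whose
   population at level k is (k+1) (sigma_kk - sigma_(k+1)(k+1)); the channel
   then telescopes it back to sigma. *)
Lemma passivizer_onto sigma :
  passive sigma -> exists2 rho, density rho & popmap lowest_uniform rho = sigma.
Proof.
move=> [[sigma_psd sigma_tr] [sigma_diag sigma_antitone]].
pose s (m : nat) : C := if insub m is Some i then sigma i i else 0.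
have sE (i : 'I_d) : s i = sigma i i by rewrite /s valK.
have s_d : s d = 0 by rewrite /s insubF ?ltnn.
pose q := \row_(k < d) (k.+1%:R * (s k - s k.+1)).
have q_ge0 k : 0 <= q 0 k.
  rewrite mxE mulr_ge0 ?ler0n // subr_ge0 sE /s.
  case: insubP => [j _ jE|_]; last exact: psd_diag_ge0.
  by apply: sigma_antitone; rewrite jE.
have image : popmap lowest_uniform (diag_mx q) = sigma.
  rewrite [RHS]diag_mx_diagonal //; congr diag_mx; apply/rowP => i; rewrite !mxE.
  transitivity (\sum_(i <= k < d) (s k - s k.+1)).
    rewrite big_geq_mkord [RHS]big_mkcond; apply: eq_bigr => k _ /=.
    rewrite diag_mx_entry eqxx mulr1n mxE /lowest_uniform.
    by case: leqP => _; rewrite ?mul0r // mul1r mulKf ?pnatr_eq0.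
  under eq_bigr do rewrite -opprB.
  by rewrite sumrN telescope_sumr 1?ltnW // s_d sE sub0r opprK.
exists (diag_mx q) => //; split; first exact: psd_diag_mx.
by rewrite -(popmap_tp lowest_uniform_sum1) image.
Qed.

Lemma trace_mul_tau (A : 'M[C]_d) k :
  \tr (A *m tau k) = (\sum_(i < d | (i <= k)%N) A i i) / k.+1%:R.
Proof.
rewrite mxtrace_mul_diag [in RHS]big_mkcond mulr_suml; apply: eq_bigr => i _.
by rewrite mxE /lowest_uniform; case: (i <= k)%N; rewrite ?mul1r ?mul0r ?mulr0.
Qed.

(* Converse direction: if the image of a map contains every passive state, an
   observable whose adjoint image is the identity has unit diagonal, because
   its expectations in the states tau k fix all its prefix sums. *)
Lemma unit_diag_of_passive_image (P : 'M[C]_d -> 'M[C]_d) (xi : 'M[C]_d) :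
  image_St_is_passive P -> adjoint_maps P xi 1%:M -> forall i, xi i i = 1.
Proof.
move=> [_ onto] adj; apply: unit_diag_of_prefix_sums => k.
have [rho [_ rho_tr] P_rho] := onto _ (tau_passive k).
have := adj rho; rewrite P_rho mul1mx rho_tr trace_mul_tau.
by move=> /(congr1 ( *%R^~ k.+1%:R)); rewrite mulfVK ?pnatr_eq0 // mul1r.
Qed.

End Passivizer.

Theorem mainTheorem7 (R : realType) (d : nat) (d_gt0 : (0 < d)%N)
  (xi : 'M[R[i]]_d) (xi_psd : psd xi) :
  correlation xi <->
  exists P : {linear 'M[R[i]]_d -> 'M[R[i]]_d},
    [/\ channel P, image_St_is_passive P & adjoint_maps P xi 1%:M].
Proof.
split=> [[_ xi_diag]|[P [_ P_image P_adj]]].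
- exists (popmap (@lowest_uniform _ d)); split.
  + exact: passivizer_channel.
  + by split; [exact: passivizer_passive | exact: passivizer_onto].
  + exact: popmap_adjoint_unit_diag (@lowest_uniform_sum1 _ d) xi_diag.
- by split=> //; exact: unit_diag_of_passive_image P_image P_adj.
Qed.
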